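(* For $i=1,2$ let $\sigma_i=(h_i:M_i:x_i:y_i:r_i)\in X\subseteq\mathbb{P}^{16}_{\mathbb{C}}$. Consider the tuple $$\big(h_1h_2 : M_1M_2 : M_2^t x_1+h_1x_2 : h_2y_1+M_1y_2 : h_2r_1+h_1r_2-2\langle x_1,y_2\rangle\big)$$ (matrices and vectors replaced by their entries). If $h_1\neq 0$ or $h_2\neq 0$, then not all entries of this tuple vanish, i.e. it defines a point of $\mathbb{P}^{16}_{\mathbb{C}}$.
   Context: Write a direct isometry of $\mathbb{R}^3$ as $v\mapsto Mv+y$ with $M\in SO(3)$, $y\in\mathbb{R}^3$. Put $x=-M^ty$ and $r=\langle y,y\rangle$. Identify the isometry with the point $(h:M:x:y:r)=(1:m_{11}:\dots:m_{33}:x_1:x_2:x_3:y_1:y_2:y_3:r)$ of $\mathbb{P}^{16}_{\mathbb{C}}$; the coordinates are $h$, the nine entries of $M$, $x$, $y$ and $r$. The variety $X\subseteq\mathbb{P}^{16}_{\mathbb{C}}$ is the complexification of the Zariski closure of the image of the group of direct isometries under this map. Equivalently, it is the complex zero set of all real polynomials vanishing on that image. Here $\langle u,u'\rangle=u^tu'$ is the complex bilinear (not Hermitian) form on $\mathbb{C}^3$. When both points are direct isometries, the tuple is the point of the composition of the two isometries. *)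

From HB Require Import structures.
From mathcomp Require Import all_boot all_order all_algebra.
From mathcomp Require Import reals.
From mathcomp Require Import complex.
From mathcomp Require Import mpoly.

Set Implicit Arguments.
Unset Strict Implicit.
Unset Printing Implicit Defensive.

Import Order.TTheory GRing.Theory Num.Theory.
Local Open Scope ring_scope.

(* A tuple (h : M : x : y : r) with entries in a ring T, laid out as the
   17 homogeneous coordinates (h, m11, m12, ..., m33, x1, x2, x3, y1, y2, y3, r)
   (mxvec is row-major: index of M i j is 3*i + j). *)
Definition coords {T : pzRingType} (h : T) (M : 'M[T]_3) (x y : 'cV[T]_3) (r : T)
  : 'I_17 -> T :=
  fun k => (row_mx (h%:M : 'M[T]_1)
            (row_mx (mxvec M) (row_mx x^T (row_mx y^T (r%:M : 'M[T]_1))))) 0 k.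

Definition bil {T : pzRingType} (u v : 'cV[T]_3) : T := (u^T *m v) 0 0.

(* Direct isometry v |-> M v + y with M in SO(3) (real entries). *)
Definition is_SO3 {R : realType} (M : 'M[R]_3) : Prop :=
  M^T *m M = 1%:M /\ \det M = 1.

Definition iso_point {R : realType} (M : 'M[R]_3) (y : 'cV[R]_3) : 'I_17 -> R :=
  coords 1 M (- (M^T *m y)) y (bil y y).

Definition vanishes_on_isometries {R : realType} (f : {mpoly R[17]}) : Prop :=
  (exists d, f \is [in R[17], d.-homog]) /\
  forall (M : 'M[R]_3) (y : 'cV[R]_3), is_SO3 M -> f.@[iso_point M y] = 0.

Definition inX {R : realType} (v : 'I_17 -> R[i]) : Prop :=
  (exists k, v k != 0) /\
  forall f : {mpoly R[17]}, vanishes_on_isometries f ->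
    (map_mpoly (fun a : R => real_complex R a) f).@[v] = 0.

Definition comp_tuple {T : pzRingType}
  (h1 : T) (M1 : 'M[T]_3) (x1 y1 : 'cV[T]_3) (r1 : T)
  (h2 : T) (M2 : 'M[T]_3) (x2 y2 : 'cV[T]_3) (r2 : T) : 'I_17 -> T :=
  coords (h1 * h2) (M1 *m M2) (M2^T *m x1 + h1 *: x2) (h2 *: y1 + M1 *m y2)
         (h2 * r1 + h1 * r2 - 2%:R * bil x1 y2).

(* On the image of the isometry group, det M = 1 = h^3, and this homogeneous
   relation persists on X; hence a point of X with h <> 0 has an invertible M.
   If the composition tuple vanished, then h1 h2 = 0, so exactly one of h1, h2
   is nonzero, say h1.  Then M1 is invertible, so M1 M2 = 0, M1 y2 = 0,
   h1 x2 = 0 and h1 r2 - 2 <x1, y2> = 0 force sigma2 = 0, which is not a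
   point of projective space.  The case h2 <> 0 is symmetric, using M2^t. *)
From HB Require Import structures.
From mathcomp Require Import all_boot all_order all_algebra.
From mathcomp Require Import reals.
From mathcomp Require Import complex.
From mathcomp Require Import mpoly.
Set Implicit Arguments.
Unset Strict Implicit.
Import Order.TTheory GRing.Theory Num.Theory.
Local Open Scope ring_scope.

Definition idx_h : 'I_17 := lshift (3 * 3 + (3 + (3 + 1))) (ord0 : 'I_1).
Definition idx_M (i j : 'I_3) : 'I_17 :=
  rshift 1 (lshift (3 + (3 + 1)) (mxvec_index i j)).

Lemma coords_idx_h (T : pzRingType) h (M : 'M[T]_3) x y r :
  coords h M x y r idx_h = h.
Proof. by rewrite /coords /idx_h row_mxEl mxE. Qed.

Lemma coords_idx_M (T : pzRingType) h (M : 'M[T]_3) x y r i j :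
  coords h M x y r (idx_M i j) = M i j.
Proof. by rewrite /coords /idx_M row_mxEr row_mxEl mxvecE. Qed.

Lemma coords00 (T : pzRingType) k : coords (0 : T) 0 0 0 0 k = 0.
Proof. by rewrite /coords linear0 trmx0 !raddf0 !row_mx0 mxE. Qed.

Lemma coords_eq0 (T : pzRingType) h (M : 'M[T]_3) x y r :
  (forall k, coords h M x y r k = 0) ->
  [/\ h = 0, M = 0, x = 0, y = 0 & r = 0].
Proof.
move=> coords0.
have /eqP : row_mx (h%:M : 'M[T]_1)
            (row_mx (mxvec M) (row_mx x^T (row_mx y^T (r%:M : 'M[T]_1)))) = 0.
  by apply/matrixP=> i k; rewrite (ord1 i) [RHS]mxE; exact: coords0.
rewrite !row_mx_eq0 mxvec_eq0 !trmx_eq0.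
case/and5P=> /eqP h0 /eqP -> /eqP -> /eqP -> /eqP r0.
have scalar1_eq0 (a : T) : a%:M = 0 :> 'M_1 -> a = 0.
  by move=> /(congr1 (fun A : 'M_1 => A 0 0)); rewrite !mxE.
by split=> //; exact: scalar1_eq0.
Qed.

Lemma bil0l (T : pzRingType) (y : 'cV[T]_3) : bil 0 y = 0.
Proof. by rewrite /bil trmx0 mul0mx mxE. Qed.

Lemma bil0r (T : pzRingType) (x : 'cV[T]_3) : bil x 0 = 0.
Proof. by rewrite /bil mulmx0 mxE. Qed.

Section DetRelation.
Variable R : comNzRingType.

Definition det_minus_cube : {mpoly R[17]} :=
  \det (\matrix_(i, j) 'X_(idx_M i j)) - 'X_idx_h ^+ 3.

Lemma det_minus_cube_homog : det_minus_cube \is [in R[17], 3.-homog].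
Proof.
have homogX k : ('X_k : {mpoly R[17]}) \is [in R[17], 1.-homog].
  by rewrite dhomogX /= mdeg1.
apply: rpredB; last by rewrite -[3%N]/(1 * 3)%N; apply: dhomogMn.
apply: rpred_sum => s _; rewrite rpredMsign.
rewrite !big_ord_recr big_ord0 /= mul1r !mxE -[3%N]/(1 + 1 + 1)%N.
by apply: dhomogM; [apply: dhomogM|]; apply: homogX.
Qed.

Lemma det_minus_cube_eval (S : comNzRingType)
    (g : {rmorphism {mpoly R[17]} -> S}) h (M : 'M[S]_3) x y r :
  (forall k, g 'X_k = coords h M x y r k) ->
  g det_minus_cube = \det M - h ^+ 3.
Proof.
move=> gX; rewrite rmorphB rmorphXn gX coords_idx_h -det_map_mx.
by congr (\det _ - _); apply/matrixP=> i j; rewrite !mxE gX coords_idx_M.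
Qed.

End DetRelation.

Lemma det_minus_cube_vanishes (R : realType) :
  vanishes_on_isometries (det_minus_cube R).
Proof.
split; first by exists 3%N; apply: det_minus_cube_homog.
move=> M y [_ detM]; rewrite /iso_point.
rewrite (@det_minus_cube_eval _ _ (meval (iso_point M y) : {rmorphism _ -> _})
  1 M (- (M^T *m y)) y (bil y y)).
  by rewrite detM expr1n subrr.
by move=> k /=; rewrite mevalXU.
Qed.

Lemma inX_det (R : realType) h (M : 'M[R[i]]_3) x y r :
  inX (coords h M x y r) -> \det M = h ^+ 3.
Proof.
case=> _ /(_ _ (det_minus_cube_vanishes R)).
have := @det_minus_cube_eval _ _
  (meval (coords h M x y r) \o map_mpoly (real_complex R) : {rmorphism _ -> _})
  h M x y r; rewrite /= => ->; last by move=> k; rewrite map_mpolyX mevalXU.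
by move/eqP; rewrite subr_eq0 => /eqP.
Qed.

Lemma unitmx_det_expn (F : fieldType) n k (M : 'M[F]_n.+1) h :
  \det M = h ^+ k -> h != 0 -> M \in unitmx.
Proof. by move=> detM h0; rewrite unitmxE detM unitfE expf_neq0. Qed.

Section CompTupleZero.
Variables (F : fieldType) (h1 h2 r1 r2 : F) (M1 M2 : 'M[F]_3).
Variables (x1 y1 x2 y2 : 'cV[F]_3).
Hypothesis comp0 : forall k, comp_tuple h1 M1 x1 y1 r1 h2 M2 x2 y2 r2 k = 0.

Lemma comp_tuple0_right (h1_neq0 : h1 != 0) (M1_unit : M1 \in unitmx) k :
  coords h2 M2 x2 y2 r2 k = 0.
Proof.
have [Eh EM Ex Ey Er] := coords_eq0 comp0.
have h2_0 : h2 = 0 by move/eqP: Eh; rewrite mulf_eq0 (negPf h1_neq0) => /eqP.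
have M2_0 : M2 = 0 by rewrite -(mulKmx M1_unit M2) EM mulmx0.
have y2_0 : y2 = 0.
  by move: Ey; rewrite h2_0 scale0r add0r => Ey; rewrite -(mulKmx M1_unit y2) Ey mulmx0.
have x2_0 : x2 = 0.
  by move/eqP: Ex; rewrite M2_0 trmx0 mul0mx add0r scaler_eq0 (negPf h1_neq0) => /eqP.
have r2_0 : r2 = 0.
  move/eqP: Er; rewrite h2_0 y2_0 bil0r mul0r mulr0 subr0 add0r.
  by rewrite mulf_eq0 (negPf h1_neq0) => /eqP.
by rewrite h2_0 M2_0 x2_0 y2_0 r2_0 coords00.
Qed.

Lemma comp_tuple0_left (h2_neq0 : h2 != 0) (M2_unit : M2 \in unitmx) k :
  coords h1 M1 x1 y1 r1 k = 0.
Proof.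
have [Eh EM Ex Ey Er] := coords_eq0 comp0.
have h1_0 : h1 = 0 by move/eqP: Eh; rewrite mulf_eq0 (negPf h2_neq0) orbF => /eqP.
have M1_0 : M1 = 0 by rewrite -(mulmxK M2_unit M1) EM mul0mx.
have y1_0 : y1 = 0.
  by move/eqP: Ey; rewrite M1_0 mul0mx addr0 scaler_eq0 (negPf h2_neq0) => /eqP.
have x1_0 : x1 = 0.
  move: Ex; rewrite h1_0 scale0r addr0 => Ex.
  by rewrite -(mulKmx (_ : M2^T \in unitmx) x1) ?Ex ?mulmx0 ?unitmx_tr.
have r1_0 : r1 = 0.
  move/eqP: Er; rewrite h1_0 x1_0 bil0l mul0r mulr0 subr0 addr0.
  by rewrite mulf_eq0 (negPf h2_neq0) => /eqP.
by rewrite h1_0 M1_0 x1_0 y1_0 r1_0 coords00.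
Qed.

End CompTupleZero.

Unset Implicit Arguments.
Theorem mainTheorem1 (R : realType)
  (h1 : R[i]) (M1 : 'M[R[i]]_3) (x1 y1 : 'cV[R[i]]_3) (r1 : R[i])
  (h2 : R[i]) (M2 : 'M[R[i]]_3) (x2 y2 : 'cV[R[i]]_3) (r2 : R[i]) :
  inX (coords h1 M1 x1 y1 r1) ->
  inX (coords h2 M2 x2 y2 r2) ->
  (h1 != 0 \/ h2 != 0) ->
  exists k : 'I_17, comp_tuple h1 M1 x1 y1 r1 h2 M2 x2 y2 r2 k != 0.
Proof.
move=> X1 X2 h12; apply/existsP; rewrite -negb_forall; apply/negP.
move=> /forallP comp0; have {}comp0 k := eqP (comp0 k).
have M1_unit := unitmx_det_expn (inX_det X1).
have M2_unit := unitmx_det_expn (inX_det X2).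
have [h1_0 | h1_neq0] := eqVneq h1 0.
- have h2_neq0 : h2 != 0 by case: h12 => //; rewrite h1_0 eqxx.
  have [[k]] := X1.
  by rewrite (comp_tuple0_left comp0 h2_neq0 (M2_unit h2_neq0)) eqxx.
- have [[k]] := X2.
  by rewrite (comp_tuple0_right comp0 h1_neq0 (M1_unit h1_neq0)) eqxx.
Qed.
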